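(* Let $G$ be a connected graph with a system of $h$ pairwise non-overlapping paths between two vertices $v_i$ and $v_j$. Then $\{v_i,v_j\}$ is a pair of order $h$ in $G$.
   Context: Graphs are finite, may have multiple edges, no loops. A path is a sequence $u_0,e_1,u_1,\dots,e_\ell,u_\ell$ of vertices and edges with $e_k$ joining $u_{k-1}$ and $u_k$ and the edges pairwise distinct; its length is $\ell$. Two paths do not overlap if they have no common edge. A system of $h$ paths between $v_i$ and $v_j$ is a set of $h$ distinct paths $\mathcal{P}_1,\dots,\mathcal{P}_h$ from $v_i$ to $v_j$, all of the same length $\ell$, such that, numbering the edges of each path $1,\dots,\ell$ consecutively starting at $v_i$, for each $k=1,\dots,\ell$ the graph obtained from $G$ by removing all edges numbered $k$ (in any of the paths) is disconnected. With $c_{ij}$ ($i\neq j$) the number of edges joining $v_i,v_j$, $c_{ii}=-\sum_{j\ne i}c_{ij}$, $M(G)=(c_{ij})$: a pair $\{v_i,v_j\}$ has order $h>0$ if there is $S\in\mathbb{Z}^n$ with $M(G)S=h(e_i-e_j)$ and $\gcd(s_1-s_n,\dots,s_{n-1}-s_n)=1$; equivalently, the class of $e_i-e_j$ in $\mathbb{Z}^n/\mathrm{Im}(M(G))$ has order exactly $h$. *)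

From HB Require Import structures.
From mathcomp Require Import all_boot all_order all_algebra.
Set Implicit Arguments. Unset Strict Implicit. Unset Printing Implicit Defensive.
Import Order.TTheory GRing.Theory Num.Theory.
Local Open Scope ring_scope.

(* A finite multigraph with vertex set 'I_N (vertices v_0..v_{N-1}) and edge
   set 'I_m; edge e has endpoints (ends e).1 and (ends e).2.  Loopless is a
   separate hypothesis. *)
Section Graph.
Variables (N m : nat) (ends : 'I_m -> 'I_N * 'I_N).

Definition loopless : Prop := forall e, (ends e).1 != (ends e).2.

Definition joins (e : 'I_m) (u v : 'I_N) : bool :=
  (ends e == (u, v)) || (ends e == (v, u)).

Definition adj_without (F : {set 'I_m}) : rel 'I_N :=
  fun u v => [exists e : 'I_m, (e \notin F) && joins e u v].

Definition connected_without (F : {set 'I_m}) : bool :=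
  [forall u, [forall v, connect (adj_without F) u v]].

Definition connected_graph : Prop := connected_without set0.

(* A path u_0, e_1, u_1, ..., e_l, u_l starting at u_0 = a is encoded by the
   pair (vs, es) with vs = [:: u_1; ...; u_l], es = [:: e_1; ...; e_l]. *)
Fixpoint walk_ok (u : 'I_N) (vs : seq 'I_N) (es : seq 'I_m) : bool :=
  match vs, es with
  | [::], [::] => true
  | v :: vs', e :: es' => joins e u v && walk_ok v vs' es'
  | _, _ => false
  end.

Definition is_path (a b : 'I_N) (p : seq 'I_N * seq 'I_m) : bool :=
  [&& walk_ok a p.1 p.2, uniq p.2 & last a p.1 == b].

(* edges numbered k+1 (0-based position k) in the family P *)
Definition edges_at (h : nat) (P : 'I_h -> seq 'I_N * seq 'I_m) (k : nat)
  : {set 'I_m} := [set e | [exists t : 'I_h, onth (P t).2 k == Some e]].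

Definition path_system (a b : 'I_N) (h l : nat)
    (P : 'I_h -> seq 'I_N * seq 'I_m) : Prop :=
  [/\ injective P,
      (forall t, is_path a b (P t)),
      (forall t, size (P t).2 = l) &
      (forall k, (k < l)%N -> ~~ connected_without (edges_at P k))].

Definition non_overlapping (h : nat) (P : 'I_h -> seq 'I_N * seq 'I_m) : Prop :=
  forall t t', t != t' -> forall e, e \in (P t).2 -> e \notin (P t').2.

Definition mult (u v : 'I_N) : nat := #|[set e | joins e u v]|.

Definition lapM : 'M[int]_N :=
  \matrix_(u, v) (if u == v then (- (\sum_(w | w != u) (mult u w)%:Z))%R
                  else (mult u v)%:Z).
End Graph.

(* {v_i, v_j} has order h, for a graph on vertices 'I_n.+1 (v_n = ord_max) *)
Definition pair_order (n m : nat) (ends : 'I_m -> 'I_n.+1 * 'I_n.+1)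
    (i j : 'I_n.+1) (h : nat) : Prop :=
  (0 < h)%N /\
  exists S : 'cV[int]_n.+1,
    (lapM ends *m S = (h%:Z) *: (delta_mx i 0 - delta_mx j 0))%R /\
    \big[gcdn/0%N]_(k < n) `|(S (widen_ord (leqnSn n) k) 0 - S ord_max 0)%R|%N = 1%N.

From HB Require Import structures.
From mathcomp Require Import all_boot all_order all_algebra.
Set Implicit Arguments. Unset Strict Implicit. Unset Printing Implicit Defensive.
Import Order.TTheory GRing.Theory Num.Theory.

(* For k < l, call the far side of k the set of vertices not connected to v_i
   once the edges E_k numbered k are removed.  As the paths do not overlap,
   E_k consists of exactly one edge of each path, the one from its k-th to its
   (k+1)-th vertex; since G is connected and G - E_k is not, v_j lies on the
   far side, and so the p-th vertex of a path lies on the far side of k iff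
   k < p.  Hence M(G) applied to the indicator of the far side of k only sees
   E_k and equals the sum over the paths of e_(u_k) - e_(u_(k+1)).  Let S(v)
   count the far sides containing v: summing over k telescopes along each path
   to M(G) S = h (e_i - e_j), and S takes the value p at the p-th vertex of a
   path, so two entries of S differ by 1 and the gcd condition holds. *)

Lemma sum_ord_ltn l p : p <= l -> \sum_(k < l) (k < p) = p.
Proof.
move=> pl; rewrite -(big_mkord xpredT (fun k => (k < p) : nat)).
rewrite (big_cat_nat (leq0n p) pl) /=.
rewrite (@eq_big_nat _ _ _ 0 p _ (fun=> 1)) => [|k /andP[_ ->]//].
rewrite (@eq_big_nat _ _ _ p l _ (fun=> 0)) => [|k /andP[pk _]].
  by rewrite !sum_nat_const_nat muln1 muln0 addn0 subn0.
by rewrite ltnNge pk.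
Qed.

Section GcdDifferences.
Local Open Scope ring_scope.

Lemma biggcd_sub_ord_max_eq1 n (s : 'I_n.+1 -> int) a b : s a - s b = 1 ->
  (\big[gcdn/0]_(k < n) `|s (widen_ord (leqnSn n) k) - s ord_max|)%N = 1%N.
Proof.
move=> s_ab; set g := (\big[gcdn/0]_(k < n) _)%N.
have g_dvd v : (g%:Z %| s v - s ord_max)%Z.
  have [->|v_max] := eqVneq v ord_max; first by rewrite subrr dvdz0.
  have v_lt : (v < n)%N by rewrite ltn_neqAle -ltnS ltn_ord andbT; exact: v_max.
  have -> : v = widen_ord (leqnSn n) (Ordinal v_lt) by exact: val_inj.
  by rewrite dvdzE absz_nat /g (biggcdn_inf (Ordinal v_lt)).
have : (g%:Z %| 1%R)%Z.
  have -> : 1 = (s a - s ord_max) - (s b - s ord_max).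
    by rewrite opprB subrKA s_ab.
  by rewrite rpredB.
by rewrite dvdzE absz_nat dvdn1 => /eqP.
Qed.

End GcdDifferences.

Section Graph.
Variables (N m : nat) (ends : 'I_m -> 'I_N * 'I_N).
Implicit Types (F : {set 'I_m}) (e : 'I_m) (a u v : 'I_N).

Lemma joins_sym e u v : joins ends e u v = joins ends e v u.
Proof. by rewrite /joins orbC. Qed.

Lemma joins_ends e : joins ends e (ends e).1 (ends e).2.
Proof. by rewrite /joins -surjective_pairing eqxx. Qed.

Lemma adj_without_sym F : symmetric (adj_without ends F).
Proof.
by move=> u v; apply/existsP/existsP => -[e He]; exists e; rewrite joins_sym.
Qed.

Lemma connect_without_sym F : connect_sym (adj_without ends F).
Proof. exact/sym_connect_sym/adj_without_sym. Qed.

Lemma connect_without_ends F e a : e \notin F ->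
  connect (adj_without ends F) a (ends e).1 =
  connect (adj_without ends F) a (ends e).2.
Proof.
move=> eF; have adj_e : adj_without ends F (ends e).1 (ends e).2.
  by apply/existsP; exists e; rewrite eF joins_ends.
apply/idP/idP => [a1|a2]; first exact: connect_trans a1 (connect1 adj_e).
by apply: connect_trans a2 _; rewrite connect_without_sym connect1.
Qed.

Lemma connected_without_of_connect_ends F : connected_graph ends ->
  {in F, forall e, connect (adj_without ends F) (ends e).1 (ends e).2} ->
  connected_without ends F.
Proof.
move=> G_conn F_conn.
have sub : subrel (adj_without ends set0) (connect (adj_without ends F)).
  move=> u v /existsP[e /andP[_ e_uv]]; have [eF|eF] := boolP (e \in F).
    by case/orP: e_uv (F_conn e eF) => /eqP-> //=; rewrite connect_without_sym.
  by apply: connect1; apply/existsP; exists e; rewrite eF.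
apply/forallP => u; apply/forallP => v; apply: connect_sub sub _ _ _.
exact: forallP (forallP G_conn u) v.
Qed.

Lemma walk_ok_size a vs es : walk_ok ends a vs es -> size vs = size es.
Proof.
by elim: vs a es => [|v vs IH] a [|e es] //= /andP[_ /IH->].
Qed.

Lemma walk_ok_joins d e0 a vs es p : walk_ok ends a vs es -> p < size es ->
  joins ends (nth e0 es p) (nth d (a :: vs) p) (nth d (a :: vs) p.+1).
Proof.
elim: vs a es p => [|v vs IH] a [|e es] [|p] //= /andP[_ w] //.
exact: IH.
Qed.

Lemma walk_ok_connect F d e0 a vs es p q : walk_ok ends a vs es ->
  p <= q <= size es -> (forall r, p <= r < q -> nth e0 es r \notin F) ->
  connect (adj_without ends F) (nth d (a :: vs) p) (nth d (a :: vs) q).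
Proof.
move=> w; elim: q => [|q IH] /andP[pq qs] es_F.
  by move: pq; rewrite leqn0 => /eqP->.
rewrite leq_eqVlt ltnS in pq; case/orP: pq => [/eqP->|pq].
  exact: connect0.
apply: connect_trans (IH _ _) (connect1 _).
- by rewrite pq ltnW.
- by move=> r /andP[pr rq]; rewrite es_F // pr ltnW.
apply/existsP; exists (nth e0 es q).
by rewrite es_F ?pq ?leqnn //= walk_ok_joins.
Qed.

Local Open Scope ring_scope.

Hypothesis ends_loopless : loopless ends.

Definition indicator_col (D : pred 'I_N) : 'cV[int]_N := \col_v (D v)%:R.

Definition lap_term (f : 'I_N -> int) u e : int :=
  ((ends e).1 == u)%:R * (f (ends e).2 - f u) +
  ((ends e).2 == u)%:R * (f (ends e).1 - f u).

Lemma sum_joins e u (g : 'I_N -> int) :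
  \sum_w (joins ends e u w)%:R * g w =
  ((ends e).1 == u)%:R * g (ends e).2 + ((ends e).2 == u)%:R * g (ends e).1.
Proof.
have := ends_loopless e; rewrite /joins; case: (ends e) => a b /= ab.
have pick (c : bool) w0 : \sum_w (c && (w0 == w))%:R * g w = c%:R * g w0.
  rewrite (bigD1 w0) //= eqxx andbT big1 ?addr0 // => w /negbTE.
  by rewrite eq_sym => ->; rewrite andbF mul0r.
rewrite -!pick -big_split /=; apply: eq_bigr => w _; rewrite -mulrDl !xpair_eqE.
congr (_ * _); have [au|_] := eqVneq a u; have [bu|_] := eqVneq b u;
  rewrite /= ?andbT ?andbF ?orbF ?addr0 ?add0r //.
by move: ab; rewrite au bu eqxx.
Qed.

Lemma lapM_mul_col (f : 'I_N -> int) u :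
  (lapM ends *m \col_v f v) u 0 = \sum_e lap_term f u e.
Proof.
have -> : (lapM ends *m \col_v f v) u 0 =
           \sum_w (mult ends u w)%:Z * (f w - f u).
  rewrite mxE (bigD1 u) //= [RHS](bigD1 u) //= subrr mulr0 add0r !mxE eqxx.
  rewrite mulNr mulr_suml -sumrN -big_split /=; apply: eq_bigr => w wu.
  by rewrite !mxE eq_sym (negbTE wu) mulrBr addrC.
under eq_bigr do rewrite -natz /mult -sum1_card natr_sum big_mkcond mulr_suml.
rewrite exchange_big; apply: eq_bigr => e _.
rewrite /lap_term -(sum_joins e u (fun w => f w - f u)).
by apply: eq_bigr => w _; rewrite inE; case: joins.
Qed.

Lemma lap_termE f u e a b : joins ends e a b ->
  lap_term f u e = (a == u)%:R * (f b - f a) + (b == u)%:R * (f a - f b).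
Proof.
rewrite /lap_term /joins => /orP[]/eqP-> /=; last rewrite addrC;
by have [->|_] := eqVneq a u; have [->|_] := eqVneq b u; rewrite ?mul0r ?mul1r.
Qed.

Lemma lapM_mul_indicator (D : pred 'I_N) (I : finType) (g : I -> 'I_m)
    (a b : I -> 'I_N) :
  injective g -> (forall t, joins ends (g t) (a t) (b t)) ->
  (forall t, ~~ D (a t) && D (b t)) ->
  (forall e, e \notin g @: setT -> D (ends e).1 = D (ends e).2) ->
  lapM ends *m indicator_col D = \sum_t (delta_mx (a t) 0 - delta_mx (b t) 0).
Proof.
move=> g_inj g_ab D_ab D_ends; apply/matrixP => u c; rewrite ord1 {c}.
rewrite lapM_mul_col summxE (bigID (mem (g @: setT))) /=.
rewrite [X in _ + X]big1 ?addr0.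
  rewrite big_imset /=; last by move=> ? ? _ _ /g_inj.
  apply: eq_big => [t|t _]; first by rewrite inE.
  rewrite (lap_termE _ _ (g_ab t)) !mxE; case/andP: (D_ab t) => /negbTE-> ->.
  by rewrite !andbT !(eq_sym u) subr0 sub0r mulr1 mulrN1.
move=> e /D_ends; rewrite (lap_termE _ _ (joins_ends e)) => ->.
by rewrite subrr !mulr0 addr0.
Qed.

End Graph.

Section PathSystem.
Variables (N m : nat) (ends : 'I_m -> 'I_N * 'I_N).
Hypotheses (G_loopless : loopless ends) (G_conn : connected_graph ends).
Variables (i j : 'I_N) (h l : nat) (P : 'I_h -> seq 'I_N * seq 'I_m).
Hypotheses (P_sys : path_system ends i j l P) (P_disj : non_overlapping P).
Variable e0 : 'I_m.
Implicit Types (t : 'I_h) (k p q : nat).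

Definition path_vertex t p := nth i (i :: (P t).1) p.
Definition path_edge t k := nth e0 (P t).2 k.
Local Notation E k := (edges_at P k).
Definition far_side k : pred 'I_N :=
  [pred v | ~~ connect (adj_without ends (E k)) i v].

Lemma path_is_path t : is_path ends i j (P t).
Proof. by case: P_sys. Qed.

Lemma path_walk t : walk_ok ends i (P t).1 (P t).2.
Proof. by case/and3P: (path_is_path t). Qed.

Lemma path_uniq t : uniq (P t).2.
Proof. by case/and3P: (path_is_path t). Qed.

Lemma size_path_edges t : size (P t).2 = l.
Proof. by case: P_sys. Qed.

Lemma path_vertex0 t : path_vertex t 0 = i.
Proof. by []. Qed.

Lemma path_vertex_last t : path_vertex t l = j.
Proof.
case/and3P: (path_is_path t) => w _ /eqP <-.
rewrite /path_vertex -(size_path_edges t) -(walk_ok_size w).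
by case: (P t).1 => //= v vs; rewrite (last_nth i).
Qed.

Lemma path_edge_joins t k : k < l ->
  joins ends (path_edge t k) (path_vertex t k) (path_vertex t k.+1).
Proof. by move=> kl; rewrite walk_ok_joins ?path_walk ?size_path_edges. Qed.

Lemma edges_atE k : k < l -> E k = [set path_edge t k | t in setT].
Proof.
move=> kl; apply/setP => e; rewrite inE; apply/existsP/imsetP => -[t].
  by rewrite onthE (nth_map e0) ?size_path_edges // => /eqP[<-]; exists t.
by move=> _ ->; exists t; rewrite onthE (nth_map e0) ?size_path_edges.
Qed.

Lemma path_edge_in_path t k : k < l -> path_edge t k \in (P t).2.
Proof. by move=> kl; rewrite mem_nth ?size_path_edges. Qed.

Lemma path_edge_inj k : k < l -> injective (path_edge ^~ k).
Proof.
move=> kl t t' tt'; apply/eqP; apply: contraT.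
by move/P_disj/(_ _ (path_edge_in_path t kl)); rewrite tt' path_edge_in_path.
Qed.

Lemma path_edge_notin_edges_at t k p : k < l -> p < l -> p != k ->
  path_edge t p \notin E k.
Proof.
move=> kl pl pk; rewrite edges_atE //; apply/imsetP => -[t' _].
have [<-|tt'] := eqVneq t t'.
  by move/eqP; rewrite nth_uniq ?size_path_edges ?path_uniq ?(negbTE pk).
move=> e_tp; move: (P_disj tt' (path_edge_in_path t pl)).
by rewrite e_tp path_edge_in_path.
Qed.

Lemma connect_path_vertex t k p q : k < l -> p <= q <= l -> ~~ (p <= k < q) ->
  connect (adj_without ends (E k)) (path_vertex t p) (path_vertex t q).
Proof.
move=> kl pql pkq; apply: walk_ok_connect (path_walk t) _ _.
  by rewrite size_path_edges.
move=> r /andP[pr rq]; apply: path_edge_notin_edges_at => //.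
  by apply: leq_trans rq _; case/andP: pql.
by apply: contraNneq pkq => <-; rewrite pr.
Qed.

Lemma connect_path_prefix t k p : k < l -> p <= k ->
  connect (adj_without ends (E k)) i (path_vertex t p).
Proof.
move=> kl pk; rewrite -(path_vertex0 t); apply: connect_path_vertex => //.
  by rewrite leq0n (leq_trans pk (ltnW kl)).
by rewrite ltnNge pk andbF.
Qed.

Lemma connect_path_suffix t k p : k < p -> p <= l ->
  connect (adj_without ends (E k)) (path_vertex t p) j.
Proof.
move=> kp pl; rewrite -(path_vertex_last t); apply: connect_path_vertex => //.
  exact: leq_trans kp pl.
  by rewrite pl leqnn.
by rewrite leqNgt kp.
Qed.

Lemma far_side_last k : k < l -> far_side k j.
Proof.
move=> kl; apply/negP => ij; case: P_sys => _ _ _ /(_ k kl)/negP; apply.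
apply: connected_without_of_connect_ends => // e.
(* the removed edge between u_k and u_(k+1) joins the component of v_i to
   that of v_j, which are the same by assumption *)
rewrite {1}edges_atE // => /imsetP[t _ ->].
have i_uk := connect_path_prefix t kl (leqnn k).
have uk1_j := connect_path_suffix t (ltnSn k) kl.
have uk_uk1 :
    connect (adj_without ends (E k)) (path_vertex t k) (path_vertex t k.+1).
  rewrite connect_without_sym; apply: connect_trans uk1_j (connect_trans _ i_uk).
  by rewrite connect_without_sym.
by case/orP: (path_edge_joins t kl) => /eqP-> //=; rewrite connect_without_sym.
Qed.

Lemma far_side_path_vertex t k p : k < l -> p <= l ->
  far_side k (path_vertex t p) = (k < p).
Proof.
move=> kl pl; rewrite /far_side /=; have [kp|pk] := ltnP k p.
  apply/negP => i_up; move/negP: (far_side_last kl); apply.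
  exact: connect_trans i_up (connect_path_suffix t kp pl).
by apply: negbF; apply: connect_path_prefix.
Qed.

Local Open Scope ring_scope.

Definition cut_count : 'cV[int]_N := \sum_(k < l) indicator_col (far_side k).

Lemma cut_count_path_vertex t p : (p <= l)%N ->
  cut_count (path_vertex t p) 0 = p%:R.
Proof.
move=> pl; rewrite summxE.
under eq_bigr => k _ do rewrite mxE (far_side_path_vertex _ (ltn_ord k) pl).
by rewrite -natr_sum sum_ord_ltn.
Qed.

Lemma lapM_mul_far_side k : (k < l)%N ->
  lapM ends *m indicator_col (far_side k) =
  \sum_t (delta_mx (path_vertex t k) 0 - delta_mx (path_vertex t k.+1) 0).
Proof.
move=> kl; apply: (@lapM_mul_indicator _ _ _ G_loopless _ _ _
  (path_vertex ^~ k) (path_vertex ^~ k.+1) (path_edge_inj kl)).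
- by move=> t; apply: path_edge_joins.
- by move=> t; rewrite !far_side_path_vertex // ?ltnn ?ltnSn // ltnW.
move=> e; rewrite -edges_atE // => /connect_without_ends e_ends.
by rewrite /far_side /= e_ends.
Qed.

Lemma lapM_mul_cut_count :
  lapM ends *m cut_count = h%:Z *: (delta_mx i 0 - delta_mx j 0).
Proof.
rewrite mulmx_sumr; under eq_bigr => k _ do rewrite lapM_mul_far_side //.
rewrite exchange_big /= (eq_bigr (fun=> delta_mx i 0 - delta_mx j 0)) => [|t _].
  by rewrite sumr_const card_ord -scaler_nat natz.
rewrite -(path_vertex0 t) -(path_vertex_last t) -opprB.
rewrite -(telescope_sumr (fun k => delta_mx (path_vertex t k) 0) (leq0n l)).
rewrite -sumrN big_mkord.
by apply: eq_bigr => k _; rewrite opprB.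
Qed.

End PathSystem.

Unset Implicit Arguments.

Theorem lemma2p2 (n m : nat) (ends : 'I_m -> 'I_n.+1 * 'I_n.+1)
  (Hloop : loopless ends) (Hconn : connected_graph ends)
  (i j : 'I_n.+1) (Hij : i != j)
  (h l : nat) (Hh : 0 < h) (P : 'I_h -> seq 'I_n.+1 * seq 'I_m)
  (Hsys : path_system ends i j l P) (Hno : non_overlapping P) :
  pair_order ends i j h.
Proof.
pose t0 : 'I_h := Ordinal Hh.
have l_gt0 : 0 < l.
  rewrite lt0n; apply: contraNneq Hij => l0.
  by rewrite -(path_vertex_last Hsys t0) l0.
case: (P t0).2 (size_path_edges Hsys t0) => [l0|e0 _ _].
  by rewrite -l0 in l_gt0.
split=> //; exists (cut_count ends i l P); split.
  exact: lapM_mul_cut_count.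
apply: (@biggcd_sub_ord_max_eq1 n (fun v => (cut_count ends i l P v 0)%R)
  (path_vertex i P t0 1) (path_vertex i P t0 0)).
by rewrite /= !(cut_count_path_vertex Hconn Hsys Hno e0).
Qed.
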